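(* If $q<p$ are primes, then $N_{=}(qp)\ge p^2+2q^2p-4qp+2+(p-1)\min\{q-1,p-q\}$.
   Context: Graphs are finite, undirected and simple; the order of a graph is its number of vertices. For a positive integer $k$, $N_{=}(k)$ denotes the smallest integer $n\ge1$ such that every graph on $n$ vertices contains an induced regular subgraph (all vertices of the subgraph having the same degree within it) of order exactly $k$. *)

From mathcomp Require Import all_boot.
Set Implicit Arguments. Unset Strict Implicit. Unset Printing Implicit Defensive.

Definition simple_graph (n : nat) (g : rel 'I_n) : Prop :=
  irreflexive g /\ symmetric g.

Definition induced_regular (n : nat) (g : rel 'I_n) (S : {set 'I_n}) : Prop :=
  exists d : nat, forall v, v \in S -> #|[set u in S | g v u]| = d.

Definition has_induced_regular_of_order (n : nat) (g : rel 'I_n) (k : nat) : Prop :=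
  exists S : {set 'I_n}, #|S| = k /\ induced_regular g S.

(* Property whose least witness n >= 1 is N_=(k): every graph on n vertices
   contains an induced regular subgraph of order exactly k. *)
Definition forces_regular (k n : nat) : Prop :=
  forall g : rel 'I_n, simple_graph g -> has_induced_regular_of_order g k.

From mathcomp Require Import all_boot zify.
Set Implicit Arguments. Unset Strict Implicit. Unset Printing Implicit Defensive.

(* The bound is witnessed by a graph with one vertex fewer and no induced regular
   subgraph of order qp.  It is a blow-up (vertices replaced by cliques, edges by
   complete bipartite joins) of p - 1 disjoint paths 0-1-2-3 together with
   qp - 2p + 1 isolated vertices.  In component h the parts 1 and 2 form a "host"
   clique of size qp - 1 for the first q - 1 components and p - 1 for the others;
   parts 0 and 3 have sizes min (q - 1, p - q) and q - 1, and the isolated vertices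
   become cliques of size q - 1.
   Every induced path s-t-r of the base graph has an end whose only neighbour is t,
   so in the blow-up that end's closed neighbourhood lies inside the centre's; in a
   regular induced subgraph these neighbourhoods then coincide, which rules out
   induced paths altogether.  A d-regular induced subgraph is thus independent,
   hence of order at most 2 (p - 1) + qp - 2p + 1 = qp - 1, or a disjoint union of
   cliques K_(d+1) with d + 1 dividing qp, i.e. d + 1 in {q, p, qp}.  Such a clique
   contains a host vertex, different cliques use different components, and the
   clique fits in that component's host range: this leaves room for at most p - 1
   cliques of size q, q - 1 of size p and none of size qp. *)

Lemma leq_card_in_ltn (T : finType) (A : {pred T}) (f : T -> nat) n :
  {in A &, injective f} -> {in A, forall x, f x < n} -> #|A| <= n.
Proof.
move=> f_inj f_lt; rewrite cardE -(size_map f) -(size_iota 0 n).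
apply: uniq_leq_size => [|y /mapP [x]]; last by rewrite mem_enum mem_iota => /f_lt fx ->.
by rewrite map_inj_in_uniq ?enum_uniq // => x y; rewrite !mem_enum; apply: f_inj.
Qed.

Lemma dvdn_prime_mul p q t : prime p -> prime q -> t %| q * p ->
  [\/ t = 1, t = q, t = p | t = q * p].
Proof.
move=> pr_p pr_q t_dvd.
have [p_dvd | p_ndvd] := boolP (p %| t).
  have : t %/ p %| q by rewrite -(dvdn_pmul2r (prime_gt0 pr_p)) divnK.
  case/primeP: pr_q => _ /[apply] /orP [] /eqP tp; rewrite -(divnK p_dvd) tp ?mul1n.
    by constructor 3.
  by constructor 4.
have : t %| q by rewrite -(@Gauss_dvdl t q p) // coprime_sym prime_coprime.
by case/primeP: pr_q => _ /[apply] /orP [] /eqP ->; [constructor 1 | constructor 2].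
Qed.

Definition regular_on (T : finType) (g : rel T) (S : {set T}) (d : nat) :=
  {in S, forall v, #|[set u in S | g v u]| = d}.

Lemma forces_regular_embed (T : finType) (g : rel T) k n :
  forces_regular k n -> n <= #|T| -> irreflexive g -> symmetric g ->
  exists2 S : {set T}, #|S| = k & exists d, regular_on g S d.
Proof.
move=> forces leTn g_irr g_sym.
pose f (i : 'I_n) : T := enum_val (widen_ord leTn i).
have f_inj : injective f by move=> i j /enum_val_inj /(congr1 val) /= /val_inj.
pose g' : rel 'I_n := fun i j => g (f i) (f j).
have [S [<- [d regS]]] := forces g' (conj (fun i => g_irr (f i)) (fun i j => g_sym (f i) (f j))).
exists (f @: S); first by rewrite card_imset.
exists d => _ /imsetP [v vS ->]; rewrite -(regS v vS) -[RHS](card_imset _ f_inj).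
apply: eq_card => u; rewrite inE; apply/andP/imsetP.
  by case=> /imsetP [w wS ->] gvw; exists w; rewrite ?inE ?wS.
by case=> w /[!inE] /andP [wS gvw] ->; rewrite imset_f.
Qed.

Section RegularSubgraph.
Variables (T : finType) (g : rel T).
Hypotheses (g_irr : irreflexive g) (g_sym : symmetric g).

Lemma regular_dominated_adj (S : {set T}) d x y z :
  regular_on g S d -> x \in S -> y \in S -> z \in S ->
  (forall u, g x u -> u != y -> g y u) ->
  g x y -> g y z -> z != x -> g x z.
Proof.
move=> regS xS yS zS dom gxy gyz zx; apply: contraT => ngxz.
pose N v := [set u in S | g v u].
have yNx : y \in N x by rewrite inE yS.
have sub : x |: (z |: (N x :\ y)) \subset N y.
  apply/subsetP => u /[!inE] /or3P [/eqP -> | /eqP -> | /and3P [uy uS gxu]].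
  - by rewrite xS g_sym.
  - by rewrite zS.
  by rewrite uS dom.
have cardNx : #|N x :\ y| = d.-1 by rewrite -(regS x xS) (cardsD1 y (N x)) yNx.
have d_gt0 : 0 < d by rewrite -(regS x xS); apply/card_gt0P; exists y.
have := subset_leq_card sub.
rewrite cardsU1 cardsU1 cardNx regS // !inE (negbTE ngxz) g_irr.
by rewrite [x == z]eq_sym (negbTE zx) !andbF /=; lia.
Qed.

Section Clusters.
Variables (S : {set T}) (d : nat).

Definition clusters := equivalence_partition (fun x y => (x == y) || g x y) S.

Hypotheses (regS : regular_on g S d)
  (transS : {in S & &, forall x y z, g x y -> g y z -> x != z -> g x z}).

Lemma cluster_equiv : {in S & &, equivalence_rel (fun x y => (x == y) || g x y)}.
Proof.
move=> x y z xS yS zS; split=> [|/orP [/eqP <- // | gxy]]; first by rewrite eqxx.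
have [<- | xz] := eqVneq x z; first by rewrite [g y x]g_sym gxy orbT.
have [<- | yz] := eqVneq y z; first by rewrite gxy orbT.
apply/idP/idP => /= gz; first by apply: (transS yS xS zS) => //; rewrite g_sym.
exact: (transS xS yS zS).
Qed.

Lemma clusterP B : B \in clusters ->
  exists2 x, x \in S & B = [set y in S | (x == y) || g x y].
Proof. by case/imsetP => x xS ->; exists x. Qed.

Lemma card_cluster B : B \in clusters -> #|B| = d.+1.
Proof.
case/clusterP => x xS ->.
have -> : [set y in S | (x == y) || g x y] = x |: [set y in S | g x y].
  by apply/setP => y; rewrite !inE; case: eqVneq => [<- | _]; rewrite ?xS.
by rewrite cardsU1 regS // inE g_irr andbF.
Qed.

Lemma card_clusters : #|S| = #|clusters| * d.+1.
Proof. exact: card_uniform_partition card_cluster (equivalence_partitionP cluster_equiv). Qed.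

Lemma cluster_clique B : B \in clusters -> {in B &, forall y z, y != z -> g y z}.
Proof.
case/clusterP => x xS -> y z /[!inE] /andP [yS xy] /andP [zS xz] yz.
by move: xz; rewrite (cluster_equiv xS yS zS).2 // (negbTE yz).
Qed.

Lemma same_cluster B1 B2 x y : B1 \in clusters -> B2 \in clusters ->
  x \in B1 -> y \in B2 -> (x == y) || g x y -> B1 = B2.
Proof.
case/clusterP => x1 x1S -> /clusterP [x2 x2S ->] /[!inE] /andP [xS x1x] /andP [yS x2y] xy.
apply/setP => u; rewrite !inE; case uS: (u \in S) => //=.
rewrite (cluster_equiv x1S xS uS).2 // (cluster_equiv xS yS uS).2 //.
by rewrite (cluster_equiv x2S yS uS).2.
Qed.

End Clusters.
End RegularSubgraph.

Section Blowup.
Variables (B : finType) (b : rel B) (sz : B -> nat).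

Definition blowup : rel {t : B & 'I_(sz t)} :=
  fun x y => (x != y) && ((tag x == tag y) || b (tag x) (tag y)).

Lemma blowup_irr : irreflexive blowup.
Proof. by move=> x; rewrite /blowup eqxx. Qed.

Lemma tag_val_inj (x y : {t : B & 'I_(sz t)}) :
  tag x = tag y -> tagged x = tagged y :> nat -> x = y.
Proof. by case: x y => [s i] [t j] /= st; subst t => /val_inj ->. Qed.

Lemma card_blowup : #|{: {t : B & 'I_(sz t)}}| = \sum_t sz t.
Proof.
rewrite card_tagged sumnE big_map big_enum /=.
by apply: eq_bigr => t _; rewrite card_ord.
Qed.

Lemma card_fiber (A : {pred {t : B & 'I_(sz t)}}) t :
  {in A, forall x, tag x = t} -> #|A| <= sz t.
Proof.
move=> tagA; apply: (@leq_card_in_ltn _ _ (fun x => nat_of_ord (tagged x))).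
  by move=> x y xA yA; apply: tag_val_inj; rewrite !tagA.
by move=> x /tagA <-; apply: ltn_ord.
Qed.

Hypothesis b_sym : symmetric b.

Lemma blowup_sym : symmetric blowup.
Proof. by move=> x y; rewrite /blowup eq_sym [tag x == _]eq_sym b_sym. Qed.

Lemma blowup_dominated x y :
  tag x = tag y \/ b (tag x) (tag y) /\ (forall t, b (tag x) t -> t = tag y) ->
  forall u, blowup x u -> u != y -> blowup y u.
Proof.
move=> dom u /andP [_ xu] uy; rewrite /blowup eq_sym uy /=.
case: dom => [<- // | [bxy leaf]].
by case/orP: xu => [/eqP <- | /leaf ->]; rewrite ?eqxx // b_sym bxy orbT.
Qed.

Hypothesis b_P3_leaf : forall s t r, b s t -> b t r -> s != r ->
  (forall u, b s u -> u = t) \/ (forall u, b r u -> u = t).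

Lemma blowup_regular_trans S d : regular_on blowup S d ->
  {in S & &, forall x y z, blowup x y -> blowup y z -> x != z -> blowup x z}.
Proof.
move=> regS x y z xS yS zS.
wlog dom : x z xS zS /
  tag x = tag y \/ b (tag x) (tag y) /\ (forall t, b (tag x) t -> t = tag y).
  move=> dominated gxy gyz xz.
  have swap : tag z = tag y \/ b (tag z) (tag y) /\ (forall t, b (tag z) t -> t = tag y) ->
      blowup x z.
    by move=> domz; rewrite blowup_sym (dominated z x) 1?blowup_sym // eq_sym.
  have [txy | ntxy] := eqVneq (tag x) (tag y); first by apply: dominated => //; left.
  have [tzy | ntzy] := eqVneq (tag z) (tag y); first by apply: swap; left.
  have [txz | ntxz] := eqVneq (tag x) (tag z); first by rewrite /blowup xz txz eqxx.
  have bxy : b (tag x) (tag y) by case/andP: gxy => _; rewrite (negbTE ntxy).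
  have byz : b (tag y) (tag z) by case/andP: gyz => _; rewrite eq_sym (negbTE ntzy).
  case: (b_P3_leaf bxy byz ntxz) => leaf; first by apply: dominated => //; right.
  by apply: swap; right; rewrite b_sym.
move=> gxy gyz xz.
apply: (regular_dominated_adj blowup_irr blowup_sym regS xS yS zS) => //.
  exact: blowup_dominated dom.
by rewrite eq_sym.
Qed.

End Blowup.

Section Construction.
Variables p q : nat.

Definition lone_count := q * p - 2 * p + 1.
Definition base := ('I_(p - 1) * 'I_4 + 'I_lone_count)%type.

Definition path_adj : rel base := fun s t =>
  match s, t with
  | inl (h, i), inl (h', j) => (h == h') && ((i.+1 == j :> nat) || (j.+1 == i :> nat))
  | _, _ => false
  end.

Definition host_size (h : nat) := if h < q - 1 then q * p - 1 else p - 1.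

Definition part_size (t : base) : nat :=
  match t with
  | inl (h, i) => nth 0 [:: minn (q - 1) (p - q); q - 1; host_size h - (q - 1); q - 1] i
  | inr _ => q - 1
  end.

Definition host (t : base) := if t is inl (_, i) then 0 < i < 3 else false.
(* [comp] is only meaningful on host parts. *)
Definition comp (t : base) : nat := if t is inl (h, _) then h else 0.

(* Parts 1 and 3 are numbered from 0 and parts 0 and 2 from q - 1: adjacent parts
   get disjoint index ranges, all inside [0, host_size h). *)
Definition offset (t : base) := if t is inl (_, i) then (if odd i then 0 else q - 1) else 0.

(* An independent set meets each path 0-1-2-3 at most once in {0, 1} and once in
   {2, 3}. *)
Definition squash (t : base) : 'I_(p - 1) * bool + 'I_lone_count :=
  match t with inl (h, i) => inl (h, 1 < i) | inr s => inr s end.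

Definition vertex := {t : base & 'I_(part_size t)}.
Definition adj : rel vertex := @blowup _ path_adj part_size.

Lemma path_adj_sym : symmetric path_adj.
Proof. by case=> [[h i]|s] [[h' j]|t] //=; rewrite eq_sym orbC. Qed.

Lemma path_P3_leaf s t r : path_adj s t -> path_adj t r -> s != r ->
  (forall u, path_adj s u -> u = t) \/ (forall u, path_adj r u -> u = t).
Proof.
have leaf (h : 'I_(p - 1)) (l m : 'I_4) : (l == 0 :> nat) || (l == 3 :> nat) ->
    path_adj (inl (h, l)) (inl (h, m)) -> forall u, path_adj (inl (h, l)) u -> u = inl (h, m).
  move=> l03 /andP [_ lm] [[h' n] /andP [/eqP <- ln]|//].
  congr (inl (_, _)); apply/val_inj => /=.
  by move: l03 lm ln (ltn_ord l) (ltn_ord m) (ltn_ord n); lia.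
case: s t r => [[h i]|//] [[h' j]|//] [[h'' k]|//] sj jk ne.
case/andP: (sj) (jk) => /eqP hh' ij /andP [/eqP hh'' jk']; subst h' h''.
have ik : i != k :> nat by apply: contraNneq ne => /val_inj ->.
have : ((i == 0 :> nat) || (i == 3 :> nat)) || ((k == 0 :> nat) || (k == 3 :> nat)).
  by move: ij jk' ik (ltn_ord i) (ltn_ord j) (ltn_ord k); lia.
case/orP => [i03 | k03]; first by left; apply: leaf.
by right; apply: leaf; rewrite // path_adj_sym.
Qed.

Lemma path_adj_host s t : path_adj s t -> host s || host t.
Proof.
case: s t => [[h i]|//] [[h' j]|//] /andP [_ ij] /=.
by move: ij (ltn_ord i) (ltn_ord j); lia.
Qed.

Lemma path_adj_comp s t : path_adj s t -> comp s = comp t.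
Proof. by case: s t => [[h i]|//] [[h' j]|//] /andP [/eqP ->]. Qed.

Lemma host_path_adj s t : host s -> host t -> comp s = comp t -> (s == t) || path_adj s t.
Proof.
case: s t => [[h i]|//] [[h' j]|//] /= hi hj /val_inj hh'; subst h'.
rewrite eqxx /=; have [-> | ij] := eqVneq i j; first by rewrite eqxx.
have ij' : i != j :> nat by [].
by move: hi hj ij' (ltn_ord i) (ltn_ord j); lia.
Qed.

Lemma comp_lt t : host t -> comp t < p - 1.
Proof. by case: t => [[h i] _|//]; apply: ltn_ord. Qed.

Lemma part_size_nonhost t : ~~ host t -> part_size t <= q - 1.
Proof. by case: t => [[h [[|[|[|[|i]]]] lti]]|s] //= _; apply: geq_minl. Qed.

Lemma path_adj_offset s t (i : 'I_(part_size s)) (j : 'I_(part_size t)) :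
  path_adj s t -> offset s + i != offset t + j.
Proof.
move=> st; suff : (offset s + part_size s <= offset t) || (offset t + part_size t <= offset s).
  by move: (ltn_ord i) (ltn_ord j); lia.
clear i j; case: s t st => [[h [[|[|[|[|i]]]] lti]]|//] [[h' [[|[|[|[|j]]]] ltj]]|//] //=.
all: by case/andP => _ //; rewrite add0n leqnn ?orbT.
Qed.

Lemma path_adj_squash s t : squash s = squash t -> s != t -> path_adj s t.
Proof.
case: s t => [[h i]|s] [[h' j]|t] //= [].
  move=> <- ij ne; rewrite eqxx /=.
  have ij' : i != j :> nat by apply: contraNneq ne => /val_inj ->.
  by move: ij ij' (ltn_ord i) (ltn_ord j); case: ltnP; case: ltnP; lia.
by move=> ->; rewrite eqxx.
Qed.

Hypothesis hqp : q < p.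

Lemma offset_lt t (i : 'I_(part_size t)) : offset t + i < host_size (comp t).
Proof.
suff : offset t + part_size t <= host_size (comp t) by move: (ltn_ord i); lia.
have le_mm : minn (q - 1) (p - q) <= p - q := geq_minr _ _.
clear i; case: t => [[h [[|[|[|[|i]]]] lti]]|s] //=; rewrite /host_size; case: ifP; nia.
Qed.

Lemma adj_irr : irreflexive adj.
Proof. exact: blowup_irr. Qed.

Lemma adj_sym : symmetric adj.
Proof. exact: blowup_sym path_adj_sym. Qed.

Lemma host_adj x y : host (tag x) -> host (tag y) -> comp (tag x) = comp (tag y) ->
  (x == y) || adj x y.
Proof.
move=> hx hy xy; have [//|neq] := eqVneq x y.
by rewrite /adj /blowup neq host_path_adj.
Qed.

Lemma clique_nonhost_card (C : {set vertex}) :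
  {in C &, forall x y, x != y -> adj x y} -> {in C, forall x, ~~ host (tag x)} ->
  #|C| <= q - 1.
Proof.
move=> cliqueC nonhost.
have [-> | [x0 x0C]] := set_0Vmem C; first by rewrite cards0.
apply: leq_trans (part_size_nonhost (nonhost x0 x0C)).
apply: card_fiber => x xC; have [-> // | x0x] := eqVneq x0 x.
case/andP: (cliqueC _ _ x0C xC x0x) => _ /orP [/eqP -> // | /path_adj_host].
by rewrite (negbTE (nonhost _ x0C)) (negbTE (nonhost _ xC)).
Qed.

Lemma clique_host_card (C : {set vertex}) x0 :
  {in C &, forall x y, x != y -> adj x y} -> x0 \in C -> host (tag x0) ->
  #|C| <= host_size (comp (tag x0)).
Proof.
move=> cliqueC x0C _.
have compC : {in C, forall x, comp (tag x) = comp (tag x0)}.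
  move=> x xC; have [-> // | x0x] := eqVneq x0 x.
  by case/andP: (cliqueC _ _ x0C xC x0x) => _ /orP [/eqP -> // | /path_adj_comp ->].
pose f (x : vertex) := offset (tag x) + tagged x.
apply: (@leq_card_in_ltn _ C f) => [x y xC yC fxy | x xC].
  apply: contra_eq fxy => xy; rewrite /f.
  case/andP: (cliqueC _ _ xC yC xy) => _ /orP [/eqP txy | txy].
    rewrite [in offset (tag x)]txy eqn_add2l; apply: contra xy => /eqP vxy.
    by apply/eqP; apply: tag_val_inj.
  exact: path_adj_offset txy.
by rewrite /f -(compC x xC) offset_lt.
Qed.

Lemma card_clusters_le S d n : regular_on adj S d -> q <= d.+1 ->
  (forall h, h < p - 1 -> d.+1 <= host_size h -> h < n) -> #|clusters adj S| <= n.
Proof.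
move=> regS le_q_d hosts.
have transS := blowup_regular_trans path_adj_sym path_P3_leaf regS.
have cliqueB B (BP : B \in clusters adj S) := cluster_clique adj_sym transS BP.
have hostP B : B \in clusters adj S -> [exists x in B, host (tag x)].
  move=> BP; apply: contraT => /exists_inPn nonhost.
  have := clique_nonhost_card (cliqueB B BP) nonhost.
  by rewrite (card_cluster adj_irr regS BP); lia.
pose host_comp (B : {set vertex}) :=
  if [pick x in B | host (tag x)] is Some x then comp (tag x) else 0.
have host_compP B : B \in clusters adj S ->
    exists2 x, (x \in B) && host (tag x) & host_comp B = comp (tag x).
  rewrite /host_comp => /hostP /exists_inP [x xB hx].
  by case: pickP => [y /andP [yB hy] | /(_ x)]; [exists y; rewrite ?yB | rewrite xB hx].
apply: (@leq_card_in_ltn _ _ host_comp) => [B1 B2 B1P B2P | B BP].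
  case/host_compP: (B1P) => x1 /andP [x1B hx1] ->.
  case/host_compP: (B2P) => x2 /andP [x2B hx2] -> comp12.
  exact: (same_cluster adj_sym transS B1P B2P x1B x2B (host_adj hx1 hx2 comp12)).
case/host_compP: (BP) => x /andP [xB hx] ->; apply: hosts; first exact: comp_lt.
by rewrite -(card_cluster adj_irr regS BP); apply: clique_host_card (cliqueB B BP) xB hx.
Qed.

Hypothesis q_gt1 : 1 < q.

Lemma sum_host_size :
  \sum_(h < p - 1) host_size h = (q - 1) * (q * p - 1) + (p - q) * (p - 1).
Proof.
rewrite -(big_mkord xpredT host_size) (big_cat_nat _ (n := q - 1)) //=; last by lia.
rewrite (eq_big_nat _ _ (F2 := fun _ => q * p - 1)); last first.
  by move=> h /andP [_ lt_h]; rewrite /host_size lt_h.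
rewrite [X in _ + X](eq_big_nat _ _ (F2 := fun _ => p - 1)); last first.
  by move=> h /andP [le_h _]; rewrite /host_size ltnNge le_h.
by rewrite !sum_nat_const_nat; congr (_ * _ + _ * _); lia.
Qed.

Lemma card_vertex_parts : #|{: vertex}| =
  (p - 1) * (minn (q - 1) (p - q) + (q - 1)) + \sum_(h < p - 1) host_size h +
  lone_count * (q - 1).
Proof.
rewrite card_blowup big_sumType /= sum_nat_const card_ord; congr (_ + _).
rewrite (eq_bigr (fun x => part_size (inl (x.1, x.2)))); last by case.
rewrite -(pair_bigA _ (fun h i => part_size (inl (h, i)))) /=.
have -> : (p - 1) * (minn (q - 1) (p - q) + (q - 1)) =
    \sum_(h < p - 1) (minn (q - 1) (p - q) + (q - 1)) by rewrite sum_nat_const card_ord.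
rewrite -big_split /=; apply: eq_bigr => h _.
rewrite !big_ord_recr big_ord0 /=.
have : q - 1 <= host_size h by rewrite /host_size; case: ifP; nia.
lia.
Qed.

Lemma card_vertex :
  #|{: vertex}|.+1 = p ^ 2 + 2 * q ^ 2 * p - 4 * q * p + 2 + (p - 1) * minn (q - 1) (p - q).
Proof.
rewrite card_vertex_parts sum_host_size /lone_count.
move: (minn _ _) => m.
have [a def_q] : exists a, q = a.+2 by exists (q - 2); lia.
have [b def_p] : exists b, p = q + b.+1 by exists (p - q.+1); lia.
have -> : q - 1 = a.+1 by lia.
have -> : p - 1 = a + b.+2 by lia.
have -> : p - q = b.+1 by lia.
have -> : q * p - 1 = a.+1 * p + (a + b.+2) by rewrite def_q mulSn; lia.
have -> : q * p - 2 * p + 1 = a * p + 1 by rewrite def_q !mulSn; lia.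
have -> : p ^ 2 + 2 * q ^ 2 * p - 4 * q * p = p ^ 2 + 2 * a * (q * p) by rewrite def_q; nia.
by rewrite def_p def_q; nia.
Qed.

Lemma regular0_card_le S : regular_on adj S 0 -> #|S| <= q * p - 1.
Proof.
move=> regS.
have indepS : {in S &, forall x y, ~~ adj x y}.
  move=> x y xS yS; apply/negP => xy.
  by move/eqP: (regS x xS); rewrite cards_eq0 => /eqP/setP/(_ y); rewrite !inE yS xy.
have squash_inj : {in S &, injective (squash \o tag)}.
  move=> x y xS yS /= sxy; apply: contraTeq (indepS x y xS yS) => xy.
  rewrite /adj /blowup xy /=; have [// | txy] := eqVneq (tag x) (tag y).
  by rewrite path_adj_squash.
have := leq_card_in _ _ squash_inj; rewrite card_sum card_prod card_bool !card_ord /lone_count.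
have : 2 * p <= q * p by rewrite leq_mul2r q_gt1 orbT.
lia.
Qed.

Hypotheses (pr_p : prime p) (pr_q : prime q).

Lemma regular_card_neq S d : regular_on adj S d -> #|S| != q * p.
Proof.
move=> regS; apply/eqP => cardS.
have p_gt0 := prime_gt0 pr_p.
case: d regS => [|d] regS; first by move: (regular0_card_le regS); rewrite cardS; nia.
have transS := blowup_regular_trans path_adj_sym path_P3_leaf regS.
have cardP := card_clusters adj_irr adj_sym regS transS; rewrite cardS in cardP.
have le_clusters n : q <= d.+2 ->
    (forall h, h < p - 1 -> d.+2 <= host_size h -> h < n) -> q * p <= n * d.+2.
  by move=> le_q_d hosts; rewrite cardP leq_mul2r (card_clusters_le regS le_q_d hosts) orbT.
have : d.+2 %| q * p by rewrite cardP dvdn_mull.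
case/(dvdn_prime_mul pr_p pr_q) => [// | e | e | e]; move: le_clusters; rewrite e.
- by move=> /(_ (p - 1) (leqnn q) (fun h lt_h _ => lt_h)); nia.
- have hosts h : h < p - 1 -> p <= host_size h -> h < q - 1.
    by rewrite /host_size; case: ifP => // _; lia.
  by move=> /(_ (q - 1) (ltnW hqp) hosts); nia.
- have hosts h : h < p - 1 -> q * p <= host_size h -> h < 0.
    by rewrite /host_size; case: ifP; nia.
  by move=> /(_ 0 (leq_pmulr q p_gt0) hosts); nia.
Qed.

End Construction.

Theorem theorem8 (p q : nat) (hp : prime p) (hq : prime q) (hqp : q < p) :
  forall n : nat, 0 < n -> forces_regular (q * p) n ->
    p ^ 2 + 2 * q ^ 2 * p - 4 * q * p + 2 + (p - 1) * minn (q - 1) (p - q) <= n.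
Proof.
move=> n _ forces; have q_gt1 := prime_gt1 hq.
rewrite -(card_vertex hqp q_gt1) ltnNge; apply/negP => small.
have [S cardS [d regS]] := forces_regular_embed forces small (@adj_irr p q) (@adj_sym p q).
by move: (regular_card_neq hqp q_gt1 hp hq regS); rewrite cardS eqxx.
Qed.
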